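(* Let $\psi:\mathbb{R}\to\mathbb{C}$ be a unit-energy continuous wavelet that is an eigenfunction of the Fourier transform (an ''isoresolution wavelet''), i.e. there is $\lambda\in\mathbb{C}$ with $|\lambda|=\sqrt{2\pi}$ such that $\Psi(\omega)=\lambda\,\psi(\omega)$ for all $\omega\in\mathbb{R}$, and suppose $H_t(\psi)$ is finite. Then $H_t(\psi)=H_f(\psi)$.
   Context: The Fourier transform is $\Psi(\omega)=\int_{-\infty}^{+\infty}\psi(t)e^{-j\omega t}\,dt$. For a unit-energy wavelet, the time entropy is $H_t(\psi):=-\int_{-\infty}^{+\infty}|\psi(t)|^2\log_2|\psi(t)|^2\,dt$ and the frequency entropy is $H_f(\psi):=-\int_{-\infty}^{+\infty}\frac{1}{2\pi}|\Psi(\omega)|^2\log_2\!\left(\frac{1}{2\pi}|\Psi(\omega)|^2\right)d\omega$. *)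

From HB Require Import structures.
From mathcomp Require Import all_boot all_order all_algebra.
From mathcomp Require Import all_classical all_reals all_analysis.
From mathcomp Require Import complex.
Set Implicit Arguments. Unset Strict Implicit. Unset Printing Implicit Defensive.
Import Order.TTheory GRing.Theory Num.Theory numFieldNormedType.Exports.
Local Open Scope ring_scope.

Section Defs.
Variable R : realType.
Local Notation mu := (@lebesgue_measure R).

Definition cmod (z : R[i]) : R := Num.sqrt (complex.Re z ^+ 2 + complex.Im z ^+ 2).

(* base-2 logarithm; note ln 0 = 0 in MathComp-Analysis, so the usual
   convention 0 * log2 0 = 0 holds automatically *)
Definition log2 (x : R) : R := ln x / ln 2.

Definition expmi (x : R) : R[i] := Complex (cos x) (- sin x).

Definition cintegral (f : R -> R[i]) : R[i] :=
  Complex (\int[mu]_(t in [set: R]) complex.Re (f t))%R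
          (\int[mu]_(t in [set: R]) complex.Im (f t))%R.

Definition fourier (psi : R -> R[i]) (w : R) : R[i] :=
  cintegral (fun t => psi t * expmi (w * t)).

Definition energy (psi : R -> R[i]) : \bar R :=
  (\int[mu]_(t in [set: R]) ((cmod (psi t)) ^+ 2)%:E)%E.

Definition Ht_integrand (psi : R -> R[i]) (t : R) : R :=
  (cmod (psi t)) ^+ 2 * log2 ((cmod (psi t)) ^+ 2).

Definition time_entropy (psi : R -> R[i]) : \bar R :=
  (- \int[mu]_(t in [set: R]) (Ht_integrand psi t)%:E)%E.

Definition Hf_integrand (psi : R -> R[i]) (w : R) : R :=
  (cmod (fourier psi w)) ^+ 2 / (2 * pi) *
    log2 ((cmod (fourier psi w)) ^+ 2 / (2 * pi)).

Definition freq_entropy (psi : R -> R[i]) : \bar R :=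
  (- \int[mu]_(w in [set: R]) (Hf_integrand psi w)%:E)%E.
End Defs.

From HB Require Import structures.
From mathcomp Require Import all_boot all_order all_algebra.
From mathcomp Require Import all_classical all_reals all_analysis.
From mathcomp Require Import complex.
From mathcomp Require Import ring.
Import Order.TTheory GRing.Theory Num.Theory numFieldNormedType.Exports.
Local Open Scope ring_scope.

(* Since Psi = lambda psi with |lambda|^2 = 2 pi, the normalized spectral
   density |Psi(w)|^2 / 2pi equals |psi(w)|^2 at every point, so the two
   entropy integrands coincide pointwise. *)

Section ComplexModulus.
Variable R : realType.

Lemma sqr_cmod (z : R[i]) : cmod z ^+ 2 = complex.Re z ^+ 2 + complex.Im z ^+ 2.
Proof. by rewrite /cmod sqr_sqrtr // addr_ge0 // sqr_ge0. Qed.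

Lemma sqr_cmodM (a b : R[i]) : cmod (a * b) ^+ 2 = cmod a ^+ 2 * cmod b ^+ 2.
Proof. by rewrite !sqr_cmod; case: a => a1 a2; case: b => b1 b2 /=; ring. Qed.

End ComplexModulus.

Section FourierEigenfunction.
Variables (R : realType) (psi : R -> R[i]) (lambda : R[i]).
Hypothesis psi_eigen : forall w, fourier psi w = lambda * psi w.
Hypothesis sqr_cmod_lambda : cmod lambda ^+ 2 = 2 * pi.

Lemma Hf_integrand_eigen (w : R) : Hf_integrand psi w = Ht_integrand psi w.
Proof.
have pi2K (x : R) : 2 * pi * x / (2 * pi) = x.
  by rewrite mulrAC divff ?mul1r // mulf_neq0 // gt_eqF // pi_gt0.
by rewrite /Hf_integrand psi_eigen sqr_cmodM sqr_cmod_lambda !pi2K.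
Qed.

Lemma freq_entropy_eigen : freq_entropy psi = time_entropy psi.
Proof. by rewrite /freq_entropy; under eq_integral => w _ do rewrite Hf_integrand_eigen. Qed.

End FourierEigenfunction.

Theorem proposition4 (R : realType) (psi : R -> R[i]) (lambda : R[i]) :
  continuous (fun t : R => complex.Re (psi t)) ->
  continuous (fun t : R => complex.Im (psi t)) ->
  (@lebesgue_measure R).-integrable [set: R] (fun t => (cmod (psi t))%:E) ->
  energy psi = 1%E ->
  cmod lambda = Num.sqrt (2 * pi) ->
  (forall w : R, fourier psi w = lambda * psi w) ->
  (@lebesgue_measure R).-integrable [set: R] (fun t => (Ht_integrand psi t)%:E) ->
  time_entropy psi = freq_entropy psi.
Proof.
move=> _ _ _ _ cmod_lambda psi_eigen _.
have sqr_cmod_lambda : cmod lambda ^+ 2 = 2 * pi.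
  by rewrite cmod_lambda sqr_sqrtr // mulr_ge0 // pi_ge0.
by rewrite (@freq_entropy_eigen _ _ _ psi_eigen sqr_cmod_lambda).
Qed.
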